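(* (Preservation for $\lambda_{\mathrm{act}}$ configurations.) If $\Gamma ; \Delta \vdash \mathcal{C}_1$ and $\mathcal{C}_1 \longrightarrow \mathcal{C}_2$, then $\Gamma ; \Delta \vdash \mathcal{C}_2$.
   Context: The calculus $\lambda_{\mathrm{act}}$. Types $A,B,C ::= \mathbf{1} \mid A \xrightarrow{C} B \mid \mathsf{ActorRef}(A)$; $\alpha$ ranges over variables and names; values $V,W ::= \alpha \mid \lambda x.M \mid ()$; computations $M,N ::= V\,W \mid \mathbf{let}\ x \Leftarrow M\ \mathbf{in}\ N \mid \mathbf{return}\ V \mid \mathbf{spawn}\ M \mid \mathbf{send}\ V\ W \mid \mathbf{receive} \mid \mathbf{self}$. Value typing: $\Gamma\vdash\alpha:A$ if $\alpha:A\in\Gamma$; $\Gamma\vdash\lambda x.M:A\xrightarrow{C}B$ if $\Gamma,x:A\mid C\vdash M:B$; $\Gamma\vdash():\mathbf 1$. Computation typing $\Gamma\mid C\vdash M:A$: $V\,W:B$ if $\Gamma\vdash V:A\xrightarrow{C}B$, $\Gamma\vdash W:A$; $\Gamma\mid C\vdash\mathbf{let}\ x\Leftarrow M\ \mathbf{in}\ N:B$ if $\Gamma\mid C\vdash M:A$, $\Gamma,x:A\mid C\vdash N:B$; $\Gamma\mid C\vdash\mathbf{return}\ V:A$ if $\Gamma\vdash V:A$; $\Gamma\mid C\vdash\mathbf{send}\ V\ W:\mathbf 1$ if $\Gamma\vdash V:A$, $\Gamma\vdash W:\mathsf{ActorRef}(A)$; $\Gamma\mid A\vdash\mathbf{receive}:A$;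 $\Gamma\mid C\vdash\mathbf{spawn}\ M:\mathsf{ActorRef}(A)$ if $\Gamma\mid A\vdash M:\mathbf 1$; $\Gamma\mid A\vdash\mathbf{self}:\mathsf{ActorRef}(A)$. Evaluation contexts $E ::= [\,]\mid\mathbf{let}\ x\Leftarrow E\ \mathbf{in}\ M$; term reduction: $(\lambda x.M)V\longrightarrow_{\mathsf{M}} M\{V/x\}$, $\mathbf{let}\ x\Leftarrow\mathbf{return}\ V\ \mathbf{in}\ M\longrightarrow_{\mathsf{M}} M\{V/x\}$, $E[M]\longrightarrow_{\mathsf{M}}E[M']$ if $M\longrightarrow_{\mathsf{M}}M'$. Configurations $\mathcal{C},\mathcal{D} ::= \mathcal{C}\parallel\mathcal{D}\mid(\nu a)\mathcal{C}\mid\langle a,M,\vec V\rangle$ (actor named $a$ evaluating $M$ with mailbox $\vec V=V_1\cdot\ldots\cdot V_n$; $\epsilon$ empty). Configuration contexts $G ::= [\,]\mid G\parallel\mathcal{C}\mid(\nu a)G$. Configuration typing: (Par) $\Gamma;\Delta_1\vdash\mathcal{C}_1$, $\Gamma;\Delta_2\vdash\mathcal{C}_2$ give $\Gamma;\Delta_1,\Delta_2\vdash\mathcal{C}_1\parallel\mathcal{C}_2$; (Pid) $\Gamma,a:\mathsf{ActorRef}(A);\Delta,a:A\vdash\mathcal{C}$ gives $\Gamma;\Delta\vdash(\nu a)\mathcal{C}$; (Actor) $\Gamma,a:\mathsf{ActorRef}(A)\mid A\vdash M:\mathbf 1$ and $\Gamma,a:\mathsf{ActorRef}(A)\vdash V_i:A$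 for all $i$ give $\Gamma,a:\mathsf{ActorRef}(A);a:A\vdash\langle a,M,\vec V\rangle$. Structural congruence $\equiv$: least congruence closed under $G[-]$ with commutativity/associativity of $\parallel$ and $\mathcal{C}\parallel(\nu a)\mathcal{D}\equiv(\nu a)(\mathcal{C}\parallel\mathcal{D})$ if $a\notin\mathsf{fv}(\mathcal{C})$. Reduction $\longrightarrow$ (modulo $\equiv$): (Spawn) $\langle a,E[\mathbf{spawn}\ M],\vec V\rangle\longrightarrow(\nu b)(\langle a,E[\mathbf{return}\ b],\vec V\rangle\parallel\langle b,M,\epsilon\rangle)$, $b$ fresh; (Send) $\langle a,E[\mathbf{send}\ V'\ b],\vec V\rangle\parallel\langle b,M,\vec W\rangle\longrightarrow\langle a,E[\mathbf{return}\ ()],\vec V\rangle\parallel\langle b,M,\vec W\cdot V'\rangle$; (SendSelf) $\langle a,E[\mathbf{send}\ V'\ a],\vec V\rangle\longrightarrow\langle a,E[\mathbf{return}\ ()],\vec V\cdot V'\rangle$; (Self) $\langle a,E[\mathbf{self}],\vec V\rangle\longrightarrow\langle a,E[\mathbf{return}\ a],\vec V\rangle$; (Receive) $\langle a,E[\mathbf{receive}],W\cdot\vec V\rangle\longrightarrow\langle a,E[\mathbf{return}\ W],\vec V\rangle$; (Lift) $G[\mathcal{C}_1]\longrightarrow G[\mathcal{C}_2]$ if $\mathcal{C}_1\longrightarrow\mathcal{C}_2$; (LiftM) $\langle a,M_1,\vec V\rangle\longrightarrow\langle a,M_2,\vec V\rangle$ if $M_1\longrightarrow_{\mathsf{M}}M_2$.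 *)

(* The calculus lambda_act: syntax, typing, structural
   congruence and reduction of configurations.
   Variables are de Bruijn indices; actor names are atoms (nat). *)
From Stdlib Require Import Arith List.
Import ListNotations.

Inductive ty : Type :=
| TUnit : ty
| TFun  : ty -> ty -> ty -> ty    (* TFun A C B  =  A -C-> B *)
| TRef  : ty -> ty.

Definition name := nat.

Inductive value : Type :=
| VVar  : nat -> value
| VName : name -> value
| VLam  : comp -> value           (* \x. M  (binds index 0 in M) *)
| VUnit : value
with comp : Type :=
| CApp     : value -> value -> comp
| CLet     : comp -> comp -> comp (* let x <= M in N  (binds index 0 in N) *)
| CRet     : value -> comp
| CSpawn   : comp -> comp
| CSend    : value -> value -> comp
| CReceive : comp
| CSelf    : comp.

Fixpoint liftV (c : nat) (V : value) : value :=
  match V with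
  | VVar n => if c <=? n then VVar (S n) else VVar n
  | VName a => VName a
  | VLam M => VLam (liftC (S c) M)
  | VUnit => VUnit
  end
with liftC (c : nat) (M : comp) : comp :=
  match M with
  | CApp V W => CApp (liftV c V) (liftV c W)
  | CLet M1 N1 => CLet (liftC c M1) (liftC (S c) N1)
  | CRet V => CRet (liftV c V)
  | CSpawn M1 => CSpawn (liftC c M1)
  | CSend V W => CSend (liftV c V) (liftV c W)
  | CReceive => CReceive
  | CSelf => CSelf
  end.

(* substV k U V : substitute U for index k in V (and lower indices above k) *)
Fixpoint substV (k : nat) (U : value) (V : value) : value :=
  match V with
  | VVar n => if n =? k then U else if k <? n then VVar (pred n) else VVar n
  | VName a => VName a
  | VLam M => VLam (substC (S k) (liftV 0 U) M)
  | VUnit => VUnit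
  end
with substC (k : nat) (U : value) (M : comp) : comp :=
  match M with
  | CApp V W => CApp (substV k U V) (substV k U W)
  | CLet M1 N1 => CLet (substC k U M1) (substC (S k) (liftV 0 U) N1)
  | CRet V => CRet (substV k U V)
  | CSpawn M1 => CSpawn (substC k U M1)
  | CSend V W => CSend (substV k U V) (substV k U W)
  | CReceive => CReceive
  | CSelf => CSelf
  end.

(* M{V/x} where x is the variable bound by the enclosing binder *)
Definition subst1 (M : comp) (V : value) : comp := substC 0 V M.

(* ---------- names occurring in terms (terms do not bind names) ---------- *)
Fixpoint occV (a : name) (V : value) : bool :=
  match V with
  | VVar _ => false
  | VName b => b =? a
  | VLam M => occC a M
  | VUnit => false
  end
with occC (a : name) (M : comp) : bool :=
  match M with
  | CApp V W => occV a V || occV a W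
  | CLet M1 N1 => occC a M1 || occC a N1
  | CRet V => occV a V
  | CSpawn M1 => occC a M1
  | CSend V W => occV a V || occV a W
  | CReceive => false
  | CSelf => false
  end.

Fixpoint renameV (a b : name) (V : value) : value :=
  match V with
  | VVar n => VVar n
  | VName c => VName (if c =? a then b else c)
  | VLam M => VLam (renameC a b M)
  | VUnit => VUnit
  end
with renameC (a b : name) (M : comp) : comp :=
  match M with
  | CApp V W => CApp (renameV a b V) (renameV a b W)
  | CLet M1 N1 => CLet (renameC a b M1) (renameC a b N1)
  | CRet V => CRet (renameV a b V)
  | CSpawn M1 => CSpawn (renameC a b M1)
  | CSend V W => CSend (renameV a b V) (renameV a b W)
  | CReceive => CReceive
  | CSelf => CSelf
  end.

(* Gamma is split into a variable part (list, de Bruijn) and a name part. *)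
Definition nctx := name -> option ty.
Definition upd (N : nctx) (a : name) (T : ty) : nctx :=
  fun b => if b =? a then Some T else N b.

(* ---------- term typing:  Gamma |- V : A   and   Gamma | C |- M : A ---------- *)
Inductive vtyp (G : list ty) (N : nctx) : value -> ty -> Prop :=
| tv_var n A : nth_error G n = Some A -> vtyp G N (VVar n) A
| tv_name a A : N a = Some A -> vtyp G N (VName a) A
| tv_lam M A C B : ctyp (A :: G) N C M B -> vtyp G N (VLam M) (TFun A C B)
| tv_unit : vtyp G N VUnit TUnit
with ctyp (G : list ty) (N : nctx) : ty -> comp -> ty -> Prop :=
| tc_app C V W A B :
    vtyp G N V (TFun A C B) -> vtyp G N W A -> ctyp G N C (CApp V W) B
| tc_let C M1 N1 A B :
    ctyp G N C M1 A -> ctyp (A :: G) N C N1 B -> ctyp G N C (CLet M1 N1) B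
| tc_ret C V A : vtyp G N V A -> ctyp G N C (CRet V) A
| tc_send C V W A :
    vtyp G N V A -> vtyp G N W (TRef A) -> ctyp G N C (CSend V W) TUnit
| tc_receive A : ctyp G N A CReceive A
| tc_spawn C M A : ctyp G N A M TUnit -> ctyp G N C (CSpawn M) (TRef A)
| tc_self A : ctyp G N A CSelf (TRef A).

Inductive ectx : Type :=
| EHole : ectx
| ELet  : ectx -> comp -> ectx.

Fixpoint plugE (E : ectx) (M : comp) : comp :=
  match E with
  | EHole => M
  | ELet E1 N1 => CLet (plugE E1 M) N1
  end.

Inductive redM : comp -> comp -> Prop :=
| rm_beta M V : redM (CApp (VLam M) V) (subst1 M V)
| rm_let V M : redM (CLet (CRet V) M) (subst1 M V)
| rm_ctx E M M' : redM M M' -> redM (plugE E M) (plugE E M').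

Inductive config : Type :=
| KPar   : config -> config -> config
| KNu    : name -> config -> config
| KActor : name -> comp -> list value -> config.

Fixpoint fnK (a : name) (C : config) : bool :=
  match C with
  | KPar C1 C2 => fnK a C1 || fnK a C2
  | KNu b C1 => if b =? a then false else fnK a C1
  | KActor b M mb => (b =? a) || occC a M || existsb (occV a) mb
  end.

Fixpoint allnamesK (a : name) (C : config) : bool :=
  match C with
  | KPar C1 C2 => allnamesK a C1 || allnamesK a C2
  | KNu b C1 => (b =? a) || allnamesK a C1
  | KActor b M mb => (b =? a) || occC a M || existsb (occV a) mb
  end.

Fixpoint renameK (a b : name) (C : config) : config :=
  match C with
  | KPar C1 C2 => KPar (renameK a b C1) (renameK a b C2)
  | KNu c C1 => if c =? a then KNu c C1 else KNu c (renameK a b C1)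
  | KActor c M mb =>
      KActor (if c =? a then b else c) (renameC a b M) (map (renameV a b) mb)
  end.

Inductive gctx : Type :=
| GHole : gctx
| GPar  : gctx -> config -> gctx
| GNu   : name -> gctx -> gctx.

Fixpoint plugG (G : gctx) (C : config) : config :=
  match G with
  | GHole => C
  | GPar G1 D => KPar (plugG G1 C) D
  | GNu a G1 => KNu a (plugG G1 C)
  end.

(* structural congruence: least congruence (w.r.t. configuration contexts)
   containing commutativity/associativity of || and scope extrusion;
   alpha-conversion of nu-binders is made explicit. *)
Inductive scong : config -> config -> Prop :=
| sc_refl C : scong C C
| sc_sym C D : scong C D -> scong D C
| sc_trans C D E : scong C D -> scong D E -> scong C E
| sc_ctx G C D : scong C D -> scong (plugG G C) (plugG G D)
| sc_comm C D : scong (KPar C D) (KPar D C)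
| sc_assoc C D E : scong (KPar C (KPar D E)) (KPar (KPar C D) E)
| sc_extr a C D : fnK a C = false -> scong (KPar C (KNu a D)) (KNu a (KPar C D))
| sc_alpha a b C : allnamesK b C = false -> scong (KNu a C) (KNu b (renameK a b C)).

Inductive red : config -> config -> Prop :=
| r_spawn a E M mb b :
    fnK b (KActor a (plugE E (CSpawn M)) mb) = false ->
    red (KActor a (plugE E (CSpawn M)) mb)
        (KNu b (KPar (KActor a (plugE E (CRet (VName b))) mb) (KActor b M [])))
| r_send a E V' b mb M mbb :
    red (KPar (KActor a (plugE E (CSend V' (VName b))) mb) (KActor b M mbb))
        (KPar (KActor a (plugE E (CRet VUnit)) mb) (KActor b M (mbb ++ [V'])))
| r_sendself a E V' mb :
    red (KActor a (plugE E (CSend V' (VName a))) mb)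
        (KActor a (plugE E (CRet VUnit)) (mb ++ [V']))
| r_self a E mb :
    red (KActor a (plugE E CSelf) mb) (KActor a (plugE E (CRet (VName a))) mb)
| r_receive a E W mb :
    red (KActor a (plugE E CReceive) (W :: mb)) (KActor a (plugE E (CRet W)) mb)
| r_lift G C1 C2 : red C1 C2 -> red (plugG G C1) (plugG G C2)
| r_liftM a M1 M2 mb : redM M1 M2 -> red (KActor a M1 mb) (KActor a M2 mb)
| r_cong C C' D' D : scong C C' -> red C' D' -> scong D' D -> red C D.

Definition dctx := name -> option ty.

Definition disj_union (D D1 D2 : dctx) : Prop :=
  forall x, (D1 x = None \/ D2 x = None) /\
            D x = match D1 x with Some T => Some T | None => D2 x end.

Inductive ktyp (G : list ty) : nctx -> dctx -> config -> Prop :=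
| tk_par N D D1 D2 C1 C2 :
    disj_union D D1 D2 -> ktyp G N D1 C1 -> ktyp G N D2 C2 ->
    ktyp G N D (KPar C1 C2)
| tk_pid N D D' a A C :
    D a = None -> D' a = Some A -> (forall x, x <> a -> D' x = D x) ->
    ktyp G (upd N a (TRef A)) D' C ->
    ktyp G N D (KNu a C)
| tk_actor N D a A M mb :
    N a = Some (TRef A) -> D a = Some A -> (forall x, x <> a -> D x = None) ->
    ctyp G N A M TUnit -> Forall (fun V => vtyp G N V A) mb ->
    ktyp G N D (KActor a M mb).

(* For the term-level rules this is the
   usual de Bruijn weakening and substitution argument, together with the fact
   that the redex in an evaluation context can be replaced by any term of the
   same type.  Since reduction is taken modulo structural congruence, the heart
   of the proof is that congruent configurations have exactly the same typings:
   commutativity and associativity only redistribute the disjoint linear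
   environment; scope extrusion is sound because the linear environment only
   mentions free names, so the extruded name is absent from the other
   component; and alpha-conversion is sound because renaming a name
   consistently in the configuration, the name environment and the linear
   environment preserves typing as long as no binder captures the new name.
   Spawn extends both environments with the fresh name. *)

From Stdlib Require Import Bool Arith List Lia.
Import ListNotations.

Scheme vtyp_mut := Induction for vtyp Sort Prop
with ctyp_mut := Induction for ctyp Sort Prop.
Combined Scheme typing_mutind from vtyp_mut, ctyp_mut.

Scheme value_mut := Induction for value Sort Prop
with comp_mut := Induction for comp Sort Prop.
Combined Scheme term_mutind from value_mut, comp_mut.

Lemma existsb_occV_false x mb V :
  existsb (occV x) mb = false -> In V mb -> occV x V = false.
Proof.
  intros Hmb HV. destruct (occV x V) eqn:E; auto.
  rewrite <- Hmb. symmetry. apply existsb_exists. eauto.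
Qed.

Lemma typing_names_agree : forall G N,
  (forall V A, vtyp G N V A -> forall N',
     (forall x, occV x V = true -> N' x = N x) -> vtyp G N' V A) /\
  (forall C M B, ctyp G N C M B -> forall N',
     (forall x, occC x M = true -> N' x = N x) -> ctyp G N' C M B).
Proof.
  apply typing_mutind; intros; simpl in *; try (econstructor; eauto; fail).
  - constructor. rewrite H; [assumption | apply Nat.eqb_refl].
  - econstructor; [apply H | apply H0]; intros x Hx; apply H1; rewrite Hx; auto with bool.
  - econstructor; [apply H | apply H0]; intros x Hx; apply H1; rewrite Hx; auto with bool.
  - econstructor; [apply H | apply H0]; intros x Hx; apply H1; rewrite Hx; auto with bool.
Qed.

Lemma vtyp_names_agree G N N' V A :
  vtyp G N V A -> (forall x, occV x V = true -> N' x = N x) -> vtyp G N' V A.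
Proof. intros HV; exact (proj1 (typing_names_agree G N) V A HV N'). Qed.

Lemma ctyp_names_agree G N N' C M B :
  ctyp G N C M B -> (forall x, occC x M = true -> N' x = N x) -> ctyp G N' C M B.
Proof. intros HM; exact (proj2 (typing_names_agree G N) C M B HM N'). Qed.

Lemma mailbox_names_agree G N N' A mb :
  Forall (fun V => vtyp G N V A) mb ->
  (forall x, existsb (occV x) mb = true -> N' x = N x) ->
  Forall (fun V => vtyp G N' V A) mb.
Proof.
  intros Hmb HN. rewrite Forall_forall in *. intros V HV.
  apply (vtyp_names_agree G N); auto.
  intros x Hx. apply HN, existsb_exists. eauto.
Qed.

Lemma typing_rename : forall G N,
  (forall V A, vtyp G N V A -> forall a b N', occV b V = false -> N' b = N a ->
     (forall x, x <> a -> x <> b -> N' x = N x) -> vtyp G N' (renameV a b V) A) /\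
  (forall C M B, ctyp G N C M B -> forall a b N', occC b M = false -> N' b = N a ->
     (forall x, x <> a -> x <> b -> N' x = N x) -> ctyp G N' C (renameC a b M) B).
Proof.
  apply typing_mutind; intros; simpl in *; try (econstructor; eauto; fail);
    try (apply orb_false_iff in H1 as [? ?]; econstructor; eauto; fail).
  constructor. destruct (Nat.eqb_spec a a0).
  - congruence.
  - apply Nat.eqb_neq in H. rewrite H1; auto.
Qed.

Lemma vtyp_rename G N N' a b V A :
  vtyp G N V A -> occV b V = false -> N' b = N a ->
  (forall x, x <> a -> x <> b -> N' x = N x) -> vtyp G N' (renameV a b V) A.
Proof. intros HV; exact (proj1 (typing_rename G N) V A HV a b N'). Qed.

Lemma ctyp_rename G N N' a b C M B :
  ctyp G N C M B -> occC b M = false -> N' b = N a ->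
  (forall x, x <> a -> x <> b -> N' x = N x) -> ctyp G N' C (renameC a b M) B.
Proof. intros HM; exact (proj2 (typing_rename G N) C M B HM a b N'). Qed.

Lemma rename_not_occurring a b :
  (forall V, occV a V = false -> renameV a b V = V) /\
  (forall M, occC a M = false -> renameC a b M = M).
Proof.
  apply term_mutind; intros; simpl in *; auto;
    try (apply orb_false_iff in H1 as [? ?]; rewrite H, H0; auto);
    try (rewrite H; auto).
Qed.

Lemma rename_same a :
  (forall V, renameV a a V = V) /\ (forall M, renameC a a M = M).
Proof.
  apply term_mutind; intros; simpl in *; auto; try congruence.
  destruct (Nat.eqb_spec n a); subst; auto.
Qed.

Lemma rename_inverse a b :
  (forall V, occV b V = false -> renameV b a (renameV a b V) = V) /\
  (forall M, occC b M = false -> renameC b a (renameC a b M) = M).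
Proof.
  apply term_mutind; intros; simpl in *; auto;
    try (apply orb_false_iff in H1 as [? ?]; rewrite H, H0; auto);
    try (rewrite H; auto).
  destruct (Nat.eqb_spec n a); subst.
  - rewrite Nat.eqb_refl; auto.
  - rewrite H; auto.
Qed.

Lemma occ_rename_self a b : a <> b ->
  (forall V, occV a (renameV a b V) = false) /\
  (forall M, occC a (renameC a b M) = false).
Proof.
  intros Hab. apply term_mutind; intros; simpl; auto; try (rewrite H, H0; auto).
  destruct (Nat.eqb_spec n a); apply Nat.eqb_neq; congruence.
Qed.

Lemma typing_weaken : forall G N,
  (forall V A, vtyp G N V A -> forall G1 G2 X, G = G1 ++ G2 ->
     vtyp (G1 ++ X :: G2) N (liftV (length G1) V) A) /\
  (forall C M B, ctyp G N C M B -> forall G1 G2 X, G = G1 ++ G2 ->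
     ctyp (G1 ++ X :: G2) N C (liftC (length G1) M) B).
Proof.
  apply typing_mutind; intros; subst; simpl in *; try (econstructor; eauto; fail).
  - destruct (Nat.leb_spec (length G1) n); constructor.
    + rewrite nth_error_app2 in e by lia. rewrite nth_error_app2 by lia.
      replace (S n - length G1) with (S (n - length G1)) by lia. assumption.
    + rewrite nth_error_app1 in e by lia. rewrite nth_error_app1 by lia. assumption.
  - constructor. apply (H (A :: G1) G2 X). reflexivity.
  - econstructor; eauto. apply (H0 (A :: G1) G2 X). reflexivity.
Qed.

Lemma typing_subst : forall G N,
  (forall V B, vtyp G N V B -> forall G1 A G2 U, G = G1 ++ A :: G2 ->
     vtyp (G1 ++ G2) N U A -> vtyp (G1 ++ G2) N (substV (length G1) U V) B) /\
  (forall C M B, ctyp G N C M B -> forall G1 A G2 U, G = G1 ++ A :: G2 ->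
     vtyp (G1 ++ G2) N U A -> ctyp (G1 ++ G2) N C (substC (length G1) U M) B).
Proof.
  apply typing_mutind; intros; subst; simpl in *; try (econstructor; eauto; fail).
  - destruct (Nat.eqb_spec n (length G1)).
    + subst. rewrite nth_error_app2, Nat.sub_diag in e by lia. simpl in e. congruence.
    + destruct (Nat.ltb_spec (length G1) n); constructor.
      * rewrite nth_error_app2 in e by lia. rewrite nth_error_app2 by lia.
        replace (n - length G1) with (S (pred n - length G1)) in e by lia. assumption.
      * rewrite nth_error_app1 in e by lia. rewrite nth_error_app1 by lia. assumption.
  - constructor. apply (H (A :: G1) A0 G2); [reflexivity |].
    exact (proj1 (typing_weaken _ _) _ _ H1 [] _ A eq_refl).
  - econstructor; eauto. apply (H0 (A :: G1) A0 G2); [reflexivity |].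
    exact (proj1 (typing_weaken _ _) _ _ H2 [] _ A eq_refl).
Qed.

Lemma ctyp_subst1 G N A C M B U :
  ctyp (A :: G) N C M B -> vtyp G N U A -> ctyp G N C (subst1 M U) B.
Proof. intros HM HU. exact (proj2 (typing_subst _ _) _ _ _ HM [] A G U eq_refl HU). Qed.

Lemma occC_plugE x E M : occC x M = true -> occC x (plugE E M) = true.
Proof. induction E; simpl; intros HM; auto. rewrite IHE; auto. Qed.

(* The hole may be refilled under any name environment agreeing on the names
   of the context; spawn needs this to give the fresh name a type. *)
Lemma ctyp_plugE_inv G N C E M B : ctyp G N C (plugE E M) B ->
  exists T, ctyp G N C M T /\
    forall N' M', (forall x, occC x (plugE E M) = true -> N' x = N x) ->
      ctyp G N' C M' T -> ctyp G N' C (plugE E M') B.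
Proof.
  revert B; induction E as [| E IHE N1]; simpl; intros B HEM.
  - eauto.
  - inversion HEM as [| ? ? ? ? ? HE HN1 | | | | |]; subst.
    destruct (IHE _ HE) as [T [HM Hplug]].
    exists T; split; auto. intros N' M' HN' HM'. econstructor.
    + apply Hplug; auto. intros x Hx; apply HN'; rewrite Hx; auto.
    + apply ctyp_names_agree with N; auto.
      intros x Hx; apply HN'; rewrite Hx; auto with bool.
Qed.

Lemma redM_preserves_ctyp M M' : redM M M' ->
  forall G N C B, ctyp G N C M B -> ctyp G N C M' B.
Proof.
  induction 1; intros G N C B HM.
  - inversion HM as [? ? ? ? ? HV HW | | | | | |]; subst.
    inversion HV; subst. eapply ctyp_subst1; eauto.
  - inversion HM as [| ? ? ? ? ? HV HN1 | | | | |]; subst.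
    inversion HV; subst. eapply ctyp_subst1; eauto.
  - destruct (ctyp_plugE_inv _ _ _ _ _ _ HM) as [T [HM1 Hplug]].
    apply Hplug; eauto.
Qed.

Lemma ktyp_agree G N D C : ktyp G N D C -> forall N' D',
  (forall x, fnK x C = true -> N' x = N x) -> (forall x, D' x = D x) ->
  ktyp G N' D' C.
Proof.
  induction 1 as [N D D1 D2 C1 C2 HD _ IH1 _ IH2
                 | N D D' a A C Ha HaA HD' _ IH
                 | N D a A M mb HNa HDa HDx HM Hmb];
    intros N' D'' HN HD''; simpl in *.
  - apply tk_par with D1 D2.
    + intro x. rewrite HD''. apply HD.
    + apply IH1; auto. intros x Hx; apply HN; rewrite Hx; auto.
    + apply IH2; auto. intros x Hx; apply HN; rewrite Hx; auto with bool.
  - apply tk_pid with D' A; auto.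
    + rewrite HD''; assumption.
    + intros x Hx. rewrite HD''. auto.
    + apply IH; auto. intros x Hx. unfold upd. destruct (Nat.eqb_spec x a); auto.
      apply HN. apply Nat.eqb_neq in n. rewrite Nat.eqb_sym, n. assumption.
  - apply tk_actor with A.
    + rewrite HN; [assumption | now rewrite Nat.eqb_refl].
    + rewrite HD''; assumption.
    + intros x Hx; rewrite HD''; auto.
    + apply ctyp_names_agree with N; auto.
      intros x Hx; apply HN; rewrite Hx; auto with bool.
    + apply mailbox_names_agree with N; auto.
      intros x Hx; apply HN; rewrite Hx; auto with bool.
Qed.

Lemma ktyp_dom_free G N D C : ktyp G N D C ->
  forall x T, D x = Some T -> fnK x C = true.
Proof.
  induction 1 as [N D D1 D2 C1 C2 HD _ IH1 _ IH2
                 | N D D' a A C Ha HaA HD' _ IH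
                 | N D a A M mb HNa HDa HDx HM Hmb];
    intros x T Hx; simpl.
  - destruct (HD x) as [_ HDx]. rewrite HDx in Hx.
    destruct (D1 x) eqn:E.
    + now rewrite (IH1 x t E).
    + now rewrite (IH2 x T Hx), orb_true_r.
  - destruct (Nat.eqb_spec a x) as [<- | Hax].
    + congruence.
    + apply (IH x T). rewrite HD'; auto.
  - destruct (Nat.eqb_spec a x); auto.
    rewrite HDx in Hx; auto; discriminate.
Qed.

Lemma ktyp_dom_not_free G N D C x :
  ktyp G N D C -> fnK x C = false -> D x = None.
Proof.
  intros Hk Hx. destruct (D x) eqn:E; auto.
  erewrite ktyp_dom_free in Hx; eauto; discriminate.
Qed.

Lemma fnK_allnamesK x C : fnK x C = true -> allnamesK x C = true.
Proof.
  induction C; simpl; intros H.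
  - apply orb_true_iff in H as [H | H]; [rewrite IHC1 | rewrite IHC2]; auto with bool.
  - destruct (n =? x); simpl; auto.
  - assumption.
Qed.

Lemma allnamesK_fnK_false x C : allnamesK x C = false -> fnK x C = false.
Proof.
  intros H. destruct (fnK x C) eqn:E; auto.
  apply fnK_allnamesK in E. congruence.
Qed.

Fixpoint capture_free (a b : name) (C : config) : bool :=
  match C with
  | KPar C1 C2 => capture_free a b C1 && capture_free a b C2
  | KNu c C1 =>
      if c =? a then true else if c =? b then negb (fnK a C1) else capture_free a b C1
  | KActor _ _ _ => true
  end.

Lemma allnamesK_capture_free a b C : allnamesK b C = false -> capture_free a b C = true.
Proof.
  induction C; simpl; intros H.
  - apply orb_false_iff in H as [? ?]. rewrite IHC1, IHC2; auto.
  - apply orb_false_iff in H as [Hn HC]. rewrite Hn. destruct (n =? a); auto.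
  - reflexivity.
Qed.

Lemma fnK_renameK_self a b C : a <> b -> fnK a (renameK a b C) = false.
Proof.
  intros Hab. induction C; simpl.
  - rewrite IHC1, IHC2; auto.
  - destruct (Nat.eqb_spec n a) as [-> | Hna]; simpl.
    + now rewrite Nat.eqb_refl.
    + apply Nat.eqb_neq in Hna. now rewrite Hna.
  - rewrite (proj2 (occ_rename_self a b Hab)).
    assert (Hmb : existsb (occV a) (map (renameV a b) l) = false).
    { apply not_true_iff_false. intro E. apply existsb_exists in E as [V [HV HaV]].
      apply in_map_iff in HV as [W [<- _]].
      rewrite (proj1 (occ_rename_self a b Hab)) in HaV. discriminate. }
    rewrite Hmb, !orb_false_r. apply Nat.eqb_neq.
    destruct (Nat.eqb_spec n a); congruence.
Qed.

Lemma capture_free_renameK a b C :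
  allnamesK b C = false -> capture_free b a (renameK a b C) = true.
Proof.
  induction C; simpl; intros H.
  - apply orb_false_iff in H as [? ?]. rewrite IHC1, IHC2; auto.
  - apply orb_false_iff in H as [Hn HC]. destruct (Nat.eqb_spec n a) as [-> | Hna]; simpl.
    + rewrite Hn, Nat.eqb_refl, allnamesK_fnK_false; auto.
    + apply Nat.eqb_neq in Hna. rewrite Hn, Hna. auto.
  - reflexivity.
Qed.

Lemma renameK_not_free a b C : fnK a C = false -> renameK a b C = C.
Proof.
  induction C; simpl; intros H.
  - apply orb_false_iff in H as [? ?]. rewrite IHC1, IHC2; auto.
  - destruct (n =? a); auto. rewrite IHC; auto.
  - apply orb_false_iff in H as [H Hl]. apply orb_false_iff in H as [Hn Hc].
    rewrite Hn, (proj2 (rename_not_occurring a b) c Hc).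
    f_equal. rewrite <- (map_id l) at 2. apply map_ext_in. intros V HV.
    apply (proj1 (rename_not_occurring a b)), (existsb_occV_false _ l); auto.
Qed.

Lemma renameK_same a C : renameK a a C = C.
Proof.
  induction C; simpl.
  - rewrite IHC1, IHC2; auto.
  - destruct (n =? a); auto. rewrite IHC; auto.
  - rewrite (proj2 (rename_same a)). f_equal.
    + destruct (Nat.eqb_spec n a); auto.
    + rewrite <- (map_id l) at 2. apply map_ext, (proj1 (rename_same a)).
Qed.

Lemma renameK_inverse a b C :
  allnamesK b C = false -> renameK b a (renameK a b C) = C.
Proof.
  induction C; simpl; intros H.
  - apply orb_false_iff in H as [? ?]. rewrite IHC1, IHC2; auto.
  - apply orb_false_iff in H as [Hn HC]. destruct (n =? a); simpl; rewrite Hn.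
    + rewrite renameK_not_free; auto. apply allnamesK_fnK_false; auto.
    + rewrite IHC; auto.
  - apply orb_false_iff in H as [H Hl]. apply orb_false_iff in H as [Hn Hc].
    rewrite (proj2 (rename_inverse a b) c Hc). f_equal.
    + destruct (Nat.eqb_spec n a) as [-> |]; [now rewrite Nat.eqb_refl | now rewrite Hn].
    + rewrite map_map. rewrite <- (map_id l) at 2. apply map_ext_in. intros V HV.
      apply (proj1 (rename_inverse a b)), (existsb_occV_false _ l); auto.
Qed.

Definition rename_dctx (a b : name) (D : dctx) : dctx :=
  fun x => if x =? b then D a else if x =? a then None else D x.

Lemma ktyp_rename_not_free G N N' D C a b :
  ktyp G N D C -> fnK a C = false -> fnK b C = false ->
  (forall x, x <> a -> x <> b -> N' x = N x) ->
  ktyp G N' (rename_dctx a b D) C.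
Proof.
  intros Hk Ha Hb HN'. apply ktyp_agree with N D; auto.
  - intros x Hx. apply HN'; intros ->; congruence.
  - intro x. unfold rename_dctx.
    destruct (Nat.eqb_spec x b) as [-> |]; [| destruct (Nat.eqb_spec x a) as [-> |]]; auto.
    + rewrite !(ktyp_dom_not_free G N D C); auto.
    + symmetry; apply (ktyp_dom_not_free G N D C); auto.
Qed.

Lemma ktyp_actor_rename G N N' D c M mb a b :
  ktyp G N D (KActor c M mb) -> a <> b -> fnK b (KActor c M mb) = false ->
  N' b = N a -> (forall x, x <> a -> x <> b -> N' x = N x) ->
  ktyp G N' (rename_dctx a b D) (renameK a b (KActor c M mb)).
Proof.
  intros Hk Hab Hb HNb HN'. simpl in *.
  inversion Hk as [| | ? ? ? A ? ? HNc HDc HDx HM Hmb]; subst.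
  apply orb_false_iff in Hb as [Hb HbM]. apply orb_false_iff in Hb as [Hcb HbM'].
  apply Nat.eqb_neq in Hcb.
  apply tk_actor with A.
  - destruct (Nat.eqb_spec c a) as [-> | Hca]; [now rewrite HNb | rewrite HN'; auto].
  - unfold rename_dctx. destruct (Nat.eqb_spec c a) as [-> | Hca].
    + now rewrite !Nat.eqb_refl.
    + apply Nat.eqb_neq in Hca, Hcb. now rewrite Hca, Hcb.
  - intros x Hx. unfold rename_dctx. destruct (Nat.eqb_spec c a) as [-> | Hca].
    + apply Nat.eqb_neq in Hx. rewrite Hx.
      destruct (Nat.eqb_spec x a); auto.
    + destruct (Nat.eqb_spec x b) as [-> |]; [apply HDx; congruence |].
      destruct (Nat.eqb_spec x a); auto.
  - apply ctyp_rename with N; auto.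
  - rewrite Forall_forall in *. intros V HV. apply in_map_iff in HV as [W [<- HW]].
    apply vtyp_rename with N; auto. apply (existsb_occV_false _ mb); auto.
Qed.

Lemma ktyp_renameK G N D C : ktyp G N D C -> forall a b N', a <> b ->
  fnK b C = false -> capture_free a b C = true -> N' b = N a ->
  (forall x, x <> a -> x <> b -> N' x = N x) ->
  ktyp G N' (rename_dctx a b D) (renameK a b C).
Proof.
  induction 1 as [N D D1 D2 C1 C2 HD _ IH1 _ IH2
                 | N D D' c A C Hc HcA HD' HC IH
                 | N D c A M mb HNc HDc HDx HM Hmb];
    intros a b N' Hab Hb Hcf HNb HN'; simpl in *.
  - apply orb_false_iff in Hb as [Hb1 Hb2]. apply andb_true_iff in Hcf as [Hcf1 Hcf2].
    apply tk_par with (rename_dctx a b D1) (rename_dctx a b D2); auto.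
    unfold disj_union, rename_dctx. intro x.
    destruct (x =? b); [apply HD | destruct (x =? a); [auto | apply HD]].
  - destruct (Nat.eqb_spec c a) as [-> | Hca].
    + apply ktyp_rename_not_free with N; simpl; rewrite ?Nat.eqb_refl; auto.
      apply tk_pid with D' A; auto.
    + destruct (Nat.eqb_spec c b) as [-> | Hcb].
      * apply negb_true_iff in Hcf. rewrite renameK_not_free by assumption.
        apply ktyp_rename_not_free with N; simpl; rewrite ?Nat.eqb_refl; auto.
        -- apply tk_pid with D' A; auto.
        -- destruct (Nat.eqb_spec b a); auto.
      * apply tk_pid with (rename_dctx a b D') A.
        -- unfold rename_dctx. apply Nat.eqb_neq in Hca, Hcb. now rewrite Hca, Hcb.
        -- unfold rename_dctx. apply Nat.eqb_neq in Hca, Hcb. now rewrite Hca, Hcb.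
        -- intros x Hx. unfold rename_dctx.
           destruct (x =? b); [apply HD'; congruence | destruct (x =? a); auto].
        -- apply IH; auto; unfold upd.
           ++ apply not_eq_sym, Nat.eqb_neq in Hca, Hcb. now rewrite Hca, Hcb.
           ++ intros x Hxa Hxb. destruct (x =? c); auto.
  - apply ktyp_actor_rename with N; auto. apply tk_actor with A; auto.
Qed.

Lemma ktyp_nu_rename G N D a b C :
  a <> b -> fnK b C = false -> capture_free a b C = true ->
  ktyp G N D (KNu a C) -> ktyp G N D (KNu b (renameK a b C)).
Proof.
  intros Hab Hb Hcf Hk.
  inversion Hk as [| ? ? D' ? A ? Ha HaA HD' HC |]; subst.
  apply tk_pid with (rename_dctx a b D') A.
  - apply (ktyp_dom_not_free _ _ _ _ _ Hk). simpl.
    destruct (Nat.eqb_spec a b); congruence.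
  - unfold rename_dctx. now rewrite Nat.eqb_refl.
  - intros x Hx. unfold rename_dctx. apply Nat.eqb_neq in Hx. rewrite Hx.
    destruct (Nat.eqb_spec x a) as [-> |]; auto.
  - apply ktyp_renameK with (upd N a (TRef A)); auto; unfold upd.
    + now rewrite !Nat.eqb_refl.
    + intros x Hxa Hxb. apply Nat.eqb_neq in Hxa, Hxb. now rewrite Hxa, Hxb.
Qed.

Lemma ktyp_alpha G N D a b C : allnamesK b C = false ->
  ktyp G N D (KNu a C) <-> ktyp G N D (KNu b (renameK a b C)).
Proof.
  intros Hb. destruct (Nat.eq_dec a b) as [<- | Hab].
  { rewrite renameK_same. reflexivity. }
  split; intros Hk.
  - apply ktyp_nu_rename; auto using allnamesK_fnK_false, allnamesK_capture_free.
  - rewrite <- (renameK_inverse a b C Hb).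
    apply ktyp_nu_rename; auto using fnK_renameK_self, capture_free_renameK.
Qed.

Ltac solve_disj_union :=
  unfold disj_union in *; let x := fresh "x" in intro x;
  repeat match goal with H : forall y : name, _ |- _ => specialize (H x) end;
  repeat match goal with
         | |- context [match ?e with _ => _ end] => destruct e eqn:?
         | H : context [match ?e with _ => _ end] |- _ => destruct e eqn:?
         end; intuition congruence.

Lemma ktyp_par_comm G N D C1 C2 :
  ktyp G N D (KPar C1 C2) -> ktyp G N D (KPar C2 C1).
Proof.
  intros Hk. inversion Hk as [? ? D1 D2 ? ? HD H1 H2 | |]; subst.
  apply tk_par with D2 D1; auto. solve_disj_union.
Qed.

Lemma ktyp_par_assoc G N D C1 C2 C3 :
  ktyp G N D (KPar C1 (KPar C2 C3)) <-> ktyp G N D (KPar (KPar C1 C2) C3).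
Proof.
  split; intros Hk.
  - inversion Hk as [? ? D1 D23 ? ? HD H1 H23 | |]; subst.
    inversion H23 as [? ? D2 D3 ? ? HD23 H2 H3 | |]; subst.
    apply tk_par with (fun x => match D1 x with Some T => Some T | None => D2 x end) D3.
    + solve_disj_union.
    + apply tk_par with D1 D2; auto. solve_disj_union.
    + assumption.
  - inversion Hk as [? ? D12 D3 ? ? HD H12 H3 | |]; subst.
    inversion H12 as [? ? D1 D2 ? ? HD12 H1 H2 | |]; subst.
    apply tk_par with D1 (fun x => match D2 x with Some T => Some T | None => D3 x end).
    + solve_disj_union.
    + assumption.
    + apply tk_par with D2 D3; auto. solve_disj_union.
Qed.

Lemma ktyp_extrude G N D a C1 C2 : fnK a C1 = false ->
  ktyp G N D (KPar C1 (KNu a C2)) <-> ktyp G N D (KNu a (KPar C1 C2)).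
Proof.
  intros Ha.
  assert (HN : forall T x, fnK x C1 = true -> upd N a T x = N x).
  { intros T x Hx. unfold upd. destruct (Nat.eqb_spec x a) as [-> |]; congruence. }
  split; intros Hk.
  - inversion Hk as [? ? D1 D2 ? ? HD H1 H2 | |]; subst.
    inversion H2 as [| ? ? D2' ? A ? HD2a HD2'a HD2' H2' |]; subst.
    assert (HD1a : D1 a = None) by (eapply ktyp_dom_not_free; eauto).
    apply tk_pid with (fun x => if x =? a then Some A else D x) A.
    + destruct (HD a) as [_ ->]. now rewrite HD1a.
    + now rewrite Nat.eqb_refl.
    + intros x Hx. apply Nat.eqb_neq in Hx. now rewrite Hx.
    + apply tk_par with D1 D2'.
      * intro x. destruct (Nat.eqb_spec x a) as [-> |].
        -- rewrite HD1a, HD2'a. auto.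
        -- rewrite HD2' by assumption. apply HD.
      * apply ktyp_agree with N D1; auto.
      * assumption.
  - inversion Hk as [| ? ? D' ? A ? HDa HD'a HD' HC |]; subst.
    inversion HC as [? ? D1 D2 ? ? HD H1 H2 | |]; subst.
    assert (HD1a : D1 a = None) by (eapply ktyp_dom_not_free; eauto).
    assert (HD2a : D2 a = Some A).
    { destruct (HD a) as [_ E]. rewrite HD1a in E. congruence. }
    apply tk_par with D1 (fun x => if x =? a then None else D2 x).
    + intro x. destruct (Nat.eqb_spec x a) as [-> |].
      * rewrite HD1a, HDa. auto.
      * rewrite <- HD' by assumption. apply HD.
    + apply ktyp_agree with (upd N a (TRef A)) D1; auto.
      intros x Hx. symmetry. auto.
    + apply tk_pid with D2 A; auto.
      * now rewrite Nat.eqb_refl.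
      * intros x Hx. apply Nat.eqb_neq in Hx. now rewrite Hx.
Qed.

Lemma ktyp_plugG G g C C' :
  (forall N D, ktyp G N D C -> ktyp G N D C') ->
  forall N D, ktyp G N D (plugG g C) -> ktyp G N D (plugG g C').
Proof.
  intros HCC'. induction g; simpl; intros N D Hk; auto.
  - inversion Hk; subst. eapply tk_par; eauto.
  - inversion Hk; subst. eapply tk_pid; eauto.
Qed.

Lemma scong_ktyp G C C' : scong C C' ->
  forall N D, ktyp G N D C <-> ktyp G N D C'.
Proof.
  induction 1 as [C1 | C1 C2 _ IH | C1 C2 C3 _ IH1 _ IH2 | g C1 C2 _ IH | C1 C2
                 | C1 C2 C3 | a C1 C2 Ha | a b C1 Hb]; intros N D.
  - reflexivity.
  - now rewrite IH.
  - now rewrite IH1, IH2.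
  - split; apply ktyp_plugG; intros; apply IH; assumption.
  - split; apply ktyp_par_comm.
  - apply ktyp_par_assoc.
  - now apply ktyp_extrude.
  - now apply ktyp_alpha.
Qed.

Lemma ktyp_actor_step G N D a E M M' mb mb' :
  ktyp G N D (KActor a (plugE E M) mb) ->
  (forall A T, N a = Some (TRef A) -> Forall (fun V => vtyp G N V A) mb ->
     ctyp G N A M T -> ctyp G N A M' T /\ Forall (fun V => vtyp G N V A) mb') ->
  ktyp G N D (KActor a (plugE E M') mb').
Proof.
  intros Hk Hstep. inversion Hk as [| | ? ? ? A ? ? HNa HDa HDx HM Hmb]; subst.
  destruct (ctyp_plugE_inv _ _ _ _ _ _ HM) as [T [HM1 Hplug]].
  destruct (Hstep A T HNa Hmb HM1) as [HM1' Hmb'].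
  apply tk_actor with A; auto.
Qed.

Lemma ctyp_send_inv G N C V b T : ctyp G N C (CSend V (VName b)) T ->
  exists A, N b = Some (TRef A) /\ vtyp G N V A /\ T = TUnit.
Proof.
  intros H. inversion H as [| | | ? ? ? A HV Hb | | |]; subst.
  inversion Hb; subst. eauto.
Qed.

Lemma ktyp_send G N D a E V b mb M mbb :
  ktyp G N D (KPar (KActor a (plugE E (CSend V (VName b))) mb) (KActor b M mbb)) ->
  ktyp G N D (KPar (KActor a (plugE E (CRet VUnit)) mb) (KActor b M (mbb ++ [V]))).
Proof.
  intros Hk. inversion Hk as [? ? D1 D2 ? ? HD Ha Hb | |]; subst.
  inversion Ha as [| | ? ? ? A ? ? HNa HDa HDx HM Hmb]; subst.
  destruct (ctyp_plugE_inv _ _ _ _ _ _ HM) as [T [HS _]].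
  destruct (ctyp_send_inv _ _ _ _ _ _ HS) as [B [HNb [HV _]]].
  apply tk_par with D1 D2; auto.
  - apply (ktyp_actor_step _ _ _ _ _ _ _ _ _ Ha).
    intros A' T' _ Hmb' HS'. destruct (ctyp_send_inv _ _ _ _ _ _ HS') as [? [? [? ->]]].
    split; [constructor; constructor | assumption].
  - inversion Hb as [| | ? ? ? B' ? ? HNb' HDb HDbx HMb Hmbb]; subst.
    assert (B' = B) as -> by congruence.
    apply tk_actor with B; auto. apply Forall_app; auto.
Qed.

Lemma ktyp_sendself G N D a E V mb :
  ktyp G N D (KActor a (plugE E (CSend V (VName a))) mb) ->
  ktyp G N D (KActor a (plugE E (CRet VUnit)) (mb ++ [V])).
Proof.
  intros Hk. apply (ktyp_actor_step _ _ _ _ _ _ _ _ _ Hk).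
  intros A T HNa Hmb HM.
  destruct (ctyp_send_inv _ _ _ _ _ _ HM) as [A' [HNa' [HV ->]]].
  assert (A' = A) as -> by congruence.
  split; [constructor; constructor | apply Forall_app; auto].
Qed.

Lemma ktyp_self G N D a E mb :
  ktyp G N D (KActor a (plugE E CSelf) mb) ->
  ktyp G N D (KActor a (plugE E (CRet (VName a))) mb).
Proof.
  intros Hk. apply (ktyp_actor_step _ _ _ _ _ _ _ _ _ Hk).
  intros A T HNa Hmb HM. inversion HM; subst.
  split; [constructor; constructor; assumption | assumption].
Qed.

Lemma ktyp_receive G N D a E W mb :
  ktyp G N D (KActor a (plugE E CReceive) (W :: mb)) ->
  ktyp G N D (KActor a (plugE E (CRet W)) mb).
Proof.
  intros Hk. apply (ktyp_actor_step _ _ _ _ _ _ _ _ _ Hk).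
  intros A T HNa Hmb HM. inversion HM; subst. inversion Hmb; subst.
  split; [constructor; assumption | assumption].
Qed.

Lemma ktyp_redM G N D a M M' mb : redM M M' ->
  ktyp G N D (KActor a M mb) -> ktyp G N D (KActor a M' mb).
Proof.
  intros HMM' Hk. apply (ktyp_actor_step G N D a EHole M M' mb mb Hk).
  intros A T _ Hmb HM. split; [eapply redM_preserves_ctyp; eauto | assumption].
Qed.

Lemma ktyp_spawn G N D a E M mb b :
  fnK b (KActor a (plugE E (CSpawn M)) mb) = false ->
  ktyp G N D (KActor a (plugE E (CSpawn M)) mb) ->
  ktyp G N D (KNu b (KPar (KActor a (plugE E (CRet (VName b))) mb) (KActor b M []))).
Proof.
  intros Hfresh Hk. simpl in Hfresh.
  apply orb_false_iff in Hfresh as [Hfresh Hmb_b].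
  apply orb_false_iff in Hfresh as [Hab HEM_b]. apply Nat.eqb_neq in Hab.
  inversion Hk as [| | ? ? ? A ? ? HNa HDa HDx HEM Hmb]; subst.
  destruct (ctyp_plugE_inv _ _ _ _ _ _ HEM) as [T [HS Hplug]].
  inversion HS as [| | | | | ? ? B HM |]; subst.
  set (N' := upd N b (TRef B)).
  assert (HN'b : N' b = Some (TRef B)) by (unfold N', upd; now rewrite Nat.eqb_refl).
  assert (HN' : forall x, x <> b -> N' x = N x).
  { intros x Hx. unfold N', upd. apply Nat.eqb_neq in Hx. now rewrite Hx. }
  assert (HDb : D b = None) by (apply HDx; congruence).
  apply tk_pid with (fun x => if x =? b then Some B else D x) B.
  - assumption.
  - now rewrite Nat.eqb_refl.
  - intros x Hx. apply Nat.eqb_neq in Hx. now rewrite Hx.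
  - apply tk_par with D (fun x => if x =? b then Some B else None).
    + intro x. destruct (Nat.eqb_spec x b) as [-> |].
      * rewrite HDb. auto.
      * destruct (D x); auto.
    + apply tk_actor with A; auto.
      * rewrite HN'; auto.
      * apply Hplug; [| constructor; constructor; assumption].
        intros x Hx. apply HN'. intros ->. congruence.
      * apply mailbox_names_agree with N; auto.
        intros x Hx. apply HN'. intros ->. congruence.
    + apply tk_actor with B; auto.
      * now rewrite Nat.eqb_refl.
      * intros x Hx. apply Nat.eqb_neq in Hx. now rewrite Hx.
      * apply ctyp_names_agree with N; auto.
        intros x Hx. apply HN'. intros ->.
        rewrite (occC_plugE _ E (CSpawn M)) in HEM_b; [discriminate | assumption].
Qed.

Theorem theorem12 (G : list ty) (N : nctx) (D : dctx) (C1 C2 : config) :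
  ktyp G N D C1 -> red C1 C2 -> ktyp G N D C2.
Proof.
  intros Hk R. revert N D Hk.
  induction R as [| | | | | g C1 C2 _ IH | a M1 M2 mb HM | C1 C1' C2' C2 Hpre _ IH Hpost];
    intros N D Hk.
  - now apply ktyp_spawn.
  - now apply ktyp_send.
  - now apply ktyp_sendself.
  - now apply ktyp_self.
  - now apply ktyp_receive.
  - exact (ktyp_plugG G g _ _ IH N D Hk).
  - now apply ktyp_redM with M1.
  - apply (scong_ktyp G _ _ Hpost), IH, (scong_ktyp G _ _ Hpre), Hk.
Qed.
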